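(* Fix a social state $x\in\mathcal{X}$ and $i_0\in(0,1)$, and let $I(t)$ solve $$\dot I^d_i(t)=-\gamma I^d_i(t)+\lambda(1-s^d_i)\bigl(1-I^d_i(t)\bigr)d\,\Theta(t),\qquad \Theta(t)=\frac{\sum_{d}\sum_{i} d\,x^d_iI^d_i(t)}{\bar d},$$ with $I^d_i(0)=i_0$ for all $d,i$. Then for every $d\in\{1,\dots,D\}$ and all $i,j\in\{1,\dots,n^d\}$ with $i>j$ (so $s^d_i>s^d_j$), we have $I^d_i(t)<I^d_j(t)$ for all $t>0$.
   Context: Setting: $D\in\mathbb{N}_+$ populations indexed by degree $d\in\{1,\dots,D\}$, degree distribution $m^d\in[0,1]$, $\sum_dm^d=1$, $\bar d=\sum_d d\,m^d>0$. Population $d$ has strategies $0\le s^d_1<\dots<s^d_{n^d}\le1$ (strictly increasing). A social state is $x=(x^d_i)$ with $x^d_i\ge0$, $\sum_ix^d_i=m^d$; $\mathcal{X}$ is the set of social states. Constants $\lambda>0$, $\gamma>0$. *)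

From Stdlib Require Import Reals.
From Coquelicot Require Import Coquelicot.
Open Scope R_scope.

(* sumR n f = f 1 + f 2 + ... + f n  (indices start at 1, as in the paper) *)
Fixpoint sumR (n : nat) (f : nat -> R) : R :=
  match n with
  | O => 0
  | S k => sumR k f + f (S k)
  end.

Definition dbar (D : nat) (m : nat -> R) : R :=
  sumR D (fun d => INR d * m d).

Definition Theta (D : nat) (n : nat -> nat) (m : nat -> R)
  (x : nat -> nat -> R) (I : R -> nat -> nat -> R) (t : R) : R :=
  sumR D (fun d => sumR (n d) (fun i => INR d * x d i * I t d i)) / dbar D m.

Definition social_state (D : nat) (n : nat -> nat) (m : nat -> R)
  (x : nat -> nat -> R) : Prop :=
  (forall d i, (1 <= d <= D)%nat -> (1 <= i <= n d)%nat -> 0 <= x d i) /\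
  (forall d, (1 <= d <= D)%nat -> sumR (n d) (fun i => x d i) = m d).

(* Two facts about the trajectory I(t), t > 0, drive the proof.
   1. Invariance: every I^d_i(t) stays in the open interval (0,1).  This is a
      "continuous induction" on t: the property holds just after t = 0 by the
      initial condition; it is open in t by continuity; and it passes to the
      supremum of any interval on which it holds, because on that interval
      Theta lies in (0,1], so exp(gam t) I^d_i(t) and exp(lam d t)(1 - I^d_i(t))
      are nondecreasing (a Gronwall-type monotonicity argument).
   2. Barrier principle: a differentiable f on (0,oo) that is asymptotically
      nonnegative at 0+ and satisfies f' > 0 wherever f <= 0 is positive on
      (0,oo); the proof looks at a minimum of f on a compact interval.
   The theorem follows by applying the barrier principle to I^d_j - I^d_i
   (j < i): where this gap is <= 0, the explicit formula for its derivative is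
   positive since s^d_j < s^d_i, Theta > 0 and I^d_i < 1 (fact 1). *)

From Stdlib Require Import Reals Lra Lia Classical.
From Coquelicot Require Import Coquelicot.
Open Scope R_scope.

Lemma sumR_le N f g :
  (forall k, (1 <= k <= N)%nat -> f k <= g k) -> sumR N f <= sumR N g.
Proof.
  induction N as [|N IH]; simpl; intros Hfg; [lra|].
  assert (f (S N) <= g (S N)) by (apply Hfg; lia).
  assert (sumR N f <= sumR N g) by (apply IH; intros; apply Hfg; lia).
  lra.
Qed.

Lemma sumR_scal N c f : sumR N (fun k => c * f k) = c * sumR N f.
Proof. induction N as [|N IH]; simpl; [ring|]. rewrite IH; ring. Qed.

Lemma sumR_nonneg N f :
  (forall k, (1 <= k <= N)%nat -> 0 <= f k) -> 0 <= sumR N f.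
Proof.
  intros Hf. replace 0 with (sumR N (fun _ => 0)) by
    (clear Hf; induction N as [|N IH]; simpl; [|rewrite IH]; ring).
  now apply sumR_le.
Qed.

Lemma sumR_pos N a c :
  (forall k, (1 <= k <= N)%nat -> 0 <= a k /\ 0 <= c k /\ (0 < a k -> 0 < c k)) ->
  0 < sumR N a -> 0 < sumR N c.
Proof.
  induction N as [|N IH]; simpl; intros Hac Hs; [lra|].
  destruct (Hac (S N)) as [Ha [Hc Hpos]]; [lia|].
  assert (0 <= sumR N a) by (apply sumR_nonneg; intros; apply Hac; lia).
  assert (0 <= sumR N c) by (apply sumR_nonneg; intros; apply Hac; lia).
  destruct (Rle_lt_dec (sumR N a) 0).
  - assert (0 < c (S N)) by (apply Hpos; lra). lra.
  - assert (0 < sumR N c) by (apply IH; auto; intros; apply Hac; lia). lra.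
Qed.

Definition in_open_unit (D : nat) (n : nat -> nat) (J : nat -> nat -> R) : Prop :=
  forall d i, (1 <= d <= D)%nat -> (1 <= i <= n d)%nat -> 0 < J d i < 1.

Lemma Theta_bounds D n m x (I : R -> nat -> nat -> R) t :
  0 < dbar D m -> social_state D n m x -> in_open_unit D n (I t) ->
  0 < Theta D n m x I t <= 1.
Proof.
  intros Hdbar [Hx0 Hxsum] Hbox. unfold Theta.
  set (S d := sumR (n d) (fun i => INR d * x d i * I t d i)).
  assert (HS : forall d, (1 <= d <= D)%nat ->
    0 <= S d <= INR d * m d /\ (0 < INR d * m d -> 0 < S d)).
  { intros d Hd.
    assert (Hweights : sumR (n d) (fun i => INR d * x d i) = INR d * m d)
      by (rewrite sumR_scal, Hxsum; auto).
    assert (Hterm : forall i, (1 <= i <= n d)%nat ->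
      0 <= INR d * x d i /\ 0 < I t d i < 1).
    { intros i Hi. split; [apply Rmult_le_pos; [apply pos_INR|auto]|auto]. }
    unfold S; rewrite <- Hweights. repeat split.
    - apply sumR_nonneg; intros i Hi; destruct (Hterm i Hi); nra.
    - apply sumR_le; intros i Hi; destruct (Hterm i Hi); nra.
    - apply sumR_pos; intros i Hi; destruct (Hterm i Hi); repeat split; nra. }
  assert (Hle : sumR D S <= dbar D m) by (apply sumR_le; intros; apply HS; auto).
  assert (Hpos : 0 < sumR D S).
  { apply (sumR_pos D (fun d => INR d * m d)); [|exact Hdbar].
    intros d Hd; destruct (HS d Hd) as [[H1 H2] H3]; repeat split; lra. }
  split.
  - apply Rdiv_lt_0_compat; auto.
  - apply Rmult_le_reg_r with (dbar D m); auto.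
    unfold Rdiv; rewrite Rmult_assoc, Rinv_l by lra; lra.
Qed.

Lemma filter_forall_nat {T} (F : (T -> Prop) -> Prop) {FF : Filter F}
  (N : nat) (P : nat -> T -> Prop) :
  (forall k, (1 <= k <= N)%nat -> F (P k)) ->
  F (fun t => forall k, (1 <= k <= N)%nat -> P k t).
Proof.
  induction N as [|N IH]; intros HP.
  - apply filter_forall; intros; lia.
  - apply filter_imp with
      (fun t => (forall k, (1 <= k <= N)%nat -> P k t) /\ P (S N) t).
    + intros t [Hlow Htop] k Hk.
      destruct (Nat.eq_dec k (S N)); [subst; auto|apply Hlow; lia].
    + apply filter_and; [apply IH; intros; apply HP|apply HP]; lia.
Qed.

Lemma filter_in_open_unit {T} (F : (T -> Prop) -> Prop) {FF : Filter F}
  D n (I : T -> nat -> nat -> R) :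
  (forall d i, (1 <= d <= D)%nat -> (1 <= i <= n d)%nat ->
     F (fun t => 0 < I t d i < 1)) ->
  F (fun t => in_open_unit D n (I t)).
Proof.
  intros HI.
  apply filter_imp with (fun t => forall d, (1 <= d <= D)%nat ->
    forall i, (1 <= i <= n d)%nat -> 0 < I t d i < 1).
  { intros t Ht d i Hd Hi; now apply Ht. }
  apply (filter_forall_nat F D (fun d t => forall i, (1 <= i <= n d)%nat ->
    0 < I t d i < 1)); intros d Hd.
  apply (filter_forall_nat F (n d) (fun i t => 0 < I t d i < 1)); intros i Hi.
  now apply HI.
Qed.

Lemma at_right_ex P :
  at_right 0 P -> exists e, 0 < e /\ forall t, 0 < t < e -> P t.
Proof.
  intros [e He]. exists e; split; [apply cond_pos|]. intros t Ht.
  apply He; [|lra]. change (Rabs (t - 0) < e).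
  rewrite Rminus_0_r, Rabs_pos_eq; lra.
Qed.

Lemma locally_ex y P :
  locally y P -> exists e, 0 < e /\ forall t, Rabs (t - y) < e -> P t.
Proof. intros [e He]. exists e; split; [apply cond_pos|exact He]. Qed.

Lemma continuous_induction (G : R -> Prop) :
  at_right 0 G ->
  (forall T, 0 < T -> (forall t, 0 < t < T -> G t) -> G T) ->
  (forall T, 0 < T -> G T -> locally T G) ->
  forall t, 0 < t -> G t.
Proof.
  intros Hstart Hclosed Hopen t1 Ht1.
  destruct (at_right_ex _ Hstart) as [e0 [He0 Hinit]].
  set (E := fun tau => tau <= t1 /\ forall t, 0 < t < tau -> G t).
  destruct (completeness E) as [T [HTub HTlub]].
  { exists t1; intros y [Hy _]; exact Hy. }
  { exists 0; split; [lra|intros; lra]. }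
  assert (Hmin : 0 < Rmin e0 t1 /\ Rmin e0 t1 <= e0 /\ Rmin e0 t1 <= t1).
  { repeat split; [apply Rmin_glb_lt; lra|apply Rmin_l|apply Rmin_r]. }
  assert (HT0 : 0 < T).
  { enough (Rmin e0 t1 <= T) by lra.
    apply HTub; split; [lra|intros; apply Hinit; lra]. }
  assert (HTt1 : T <= t1) by (apply HTlub; intros y [Hy _]; exact Hy).
  (* G holds on all of (0,T): a failure at t < T would make t an upper bound. *)
  assert (Hbelow : forall t, 0 < t < T -> G t).
  { intros t Ht. apply NNPP; intros HnG.
    enough (T <= t) by lra.
    apply HTlub; intros tau [_ Htau].
    destruct (Rle_lt_dec tau t); auto.
    exfalso; apply HnG, Htau; lra. }
  destruct (Req_dec T t1) as [<-|Hne]; [now apply Hclosed|].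
  (* Otherwise G extends a little beyond T, contradicting maximality. *)
  destruct (locally_ex _ _ (Hopen T HT0 (Hclosed T HT0 Hbelow))) as [e [He Hloc]].
  set (tau := Rmin (T + e/2) t1).
  assert (tau <= T + e/2) by apply Rmin_l.
  assert (tau <= t1) by apply Rmin_r.
  assert (T < tau) by (apply Rmin_glb_lt; lra).
  enough (tau <= T) by lra.
  apply HTub; split; [assumption|]. intros t Ht.
  destruct (Rlt_le_dec t T); [apply Hbelow; lra|].
  apply Hloc; rewrite Rabs_pos_eq; lra.
Qed.

(* Differentiability implies continuity, in the form used by Stdlib's
   extreme-value theorem. *)
Lemma is_derive_continuity_pt f t l : is_derive f t l -> continuity_pt f t.
Proof.
  intros Hf. apply continuity_pt_filterlim, (ex_derive_continuous f t).
  now exists l.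
Qed.

Lemma nondecreasing_of_derive h h' a b :
  a <= b ->
  (forall t, a <= t <= b -> is_derive h t (h' t)) ->
  (forall t, a < t < b -> 0 <= h' t) ->
  h a <= h b.
Proof.
  intros Hab Hh Hpos. destruct (Rle_lt_or_eq_dec a b Hab) as [Hlt|<-]; [|lra].
  destruct (MVT_cor2 h h' a b Hlt) as [c [Hc Hcab]].
  { intros c Hc; apply is_derive_Reals, Hh, Hc. }
  assert (0 <= h' c * (b - a)) by (apply Rmult_le_pos; [apply Hpos|]; lra).
  lra.
Qed.

(* Gronwall-type positivity: if g' >= -c g on (a,b), then exp(c t) g(t) is
   nondecreasing on [a,b], so g(a) > 0 implies g(b) > 0. *)
Lemma pos_of_derive_lower_bound g g' c a b :
  a <= b ->
  (forall t, a <= t <= b -> is_derive g t (g' t)) ->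
  (forall t, a < t < b -> 0 <= c * g t + g' t) ->
  0 < g a -> 0 < g b.
Proof.
  intros Hab Hg Hlow Ha.
  assert (Hmono : exp (c * a) * g a <= exp (c * b) * g b).
  { apply (nondecreasing_of_derive (fun t => exp (c * t) * g t)
      (fun t => exp (c * t) * (c * g t + g' t))); auto.
    - intros t Ht.
      assert (Hexp : is_derive (fun u => exp (c * u)) t (c * exp (c * t)))
        by (auto_derive; auto; ring).
      pose proof (is_derive_mult _ _ t _ _ Hexp (Hg t Ht)
        ltac:(intros; apply Rmult_comm)) as Hprod.
      unfold plus, mult in Hprod; simpl in Hprod.
      replace (exp (c * t) * (c * g t + g' t))
        with (c * exp (c * t) * g t + exp (c * t) * g' t) by ring.
      exact Hprod.
    - intros t Ht. apply Rmult_le_pos; [left; apply exp_pos|now apply Hlow]. }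
  pose proof (exp_pos (c * a)). pose proof (exp_pos (c * b)).
  assert (0 < exp (c * a) * g a) by (apply Rmult_lt_0_compat; lra).
  destruct (Rle_lt_dec (g b) 0); [|assumption].
  assert (exp (c * b) * g b <= 0) by nra. lra.
Qed.

Lemma smaller_value_left f c l a :
  is_derive f c l -> 0 < l -> a < c -> exists y, a < y < c /\ f y < f c.
Proof.
  intros Hf Hl Hac. apply is_derive_Reals in Hf.
  destruct (Hf l Hl) as [del Hdel].
  set (r := Rmin del (c - a)).
  assert (0 < r) by (apply Rmin_glb_lt; [apply cond_pos|lra]).
  assert (r <= del) by apply Rmin_l.
  assert (r <= c - a) by apply Rmin_r.
  set (h := - r / 2).
  assert (Hquot : Rabs ((f (c + h) - f c) / h - l) < l).
  { apply Hdel; [unfold h; lra|]. rewrite Rabs_left; unfold h; lra. }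
  apply Rabs_def2 in Hquot.
  exists (c + h); split; [unfold h; lra|].
  assert (0 < (f (c + h) - f c) / h) by lra.
  assert (f (c + h) - f c = (f (c + h) - f c) / h * h) by (field; unfold h; lra).
  assert (h < 0) by (unfold h; lra). nra.
Qed.

Lemma positive_of_barrier f f' :
  (forall t, 0 < t -> is_derive f t (f' t)) ->
  (forall t, 0 < t -> f t <= 0 -> 0 < f' t) ->
  (forall e, 0 < e -> at_right 0 (fun t => - e < f t)) ->
  forall t, 0 < t -> 0 < f t.
Proof.
  intros Hf Hbarrier Hstart.
  (* f never becomes negative: at a minimum of f on [a,t1] below zero the
     derivative would be positive, giving even smaller values to the left. *)
  assert (Hnonneg : forall t1, 0 < t1 -> ~ f t1 < 0).
  { intros t1 Ht1 Hneg.
    destruct (at_right_ex _ (Hstart (- f t1) ltac:(lra))) as [e [He Hnear]].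
    set (a := Rmin (e/2) (t1/2)).
    assert (0 < a) by (apply Rmin_glb_lt; lra).
    assert (a <= e/2) by apply Rmin_l. assert (a <= t1/2) by apply Rmin_r.
    assert (Hfa : f t1 < f a) by (rewrite <- (Ropp_involutive (f t1)); apply Hnear; lra).
    destruct (continuity_ab_min f a t1) as [c [Hmin Hc]]; [lra| |].
    { intros u Hu; apply (is_derive_continuity_pt _ _ (f' u)), Hf; lra. }
    assert (f c <= f t1) by (apply Hmin; lra).
    assert (a < c) by (destruct (Rle_lt_or_eq_dec a c); [lra|auto|subst; lra]).
    destruct (smaller_value_left f c (f' c) a) as [y [Hy Hfy]];
      [apply Hf; lra|apply Hbarrier; lra|assumption|].
    assert (f c <= f y) by (apply Hmin; lra). lra. }
  intros t Ht. destruct (Rtotal_order (f t) 0) as [Hlt|[Heq|Hgt]]; auto.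
  - now exfalso; apply (Hnonneg t Ht).
  - destruct (smaller_value_left f t (f' t) 0) as [y [Hy Hfy]];
      [apply Hf; lra|apply Hbarrier; lra|assumption|].
    exfalso; apply (Hnonneg y); lra.
Qed.

Lemma rate_gap_pos gam lam c th sj si yj yi :
  0 <= gam -> 0 < lam -> 0 < c -> 0 < th ->
  sj < si -> sj <= 1 -> yj <= yi -> yi < 1 ->
  0 < (- gam * yj + lam * (1 - sj) * (1 - yj) * c * th)
      - (- gam * yi + lam * (1 - si) * (1 - yi) * c * th).
Proof.
  intros Hgam Hlam Hc Hth Hs Hsj Hy Hyi.
  assert (HK : 0 < lam * c * th) by (apply Rmult_lt_0_compat; [apply Rmult_lt_0_compat|]; lra).
  assert (0 <= (1 - sj) * (yi - yj)) by (apply Rmult_le_pos; lra).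
  assert (0 < (si - sj) * (1 - yi)) by (apply Rmult_lt_0_compat; lra).
  assert (0 < lam * c * th * ((1 - sj) * (yi - yj) + (si - sj) * (1 - yi)))
    by (apply Rmult_lt_0_compat; lra).
  assert (0 <= gam * (yi - yj)) by (apply Rmult_le_pos; lra).
  replace ((- gam * yj + lam * (1 - sj) * (1 - yj) * c * th)
      - (- gam * yi + lam * (1 - si) * (1 - yi) * c * th))
    with (gam * (yi - yj)
          + lam * c * th * ((1 - sj) * (yi - yj) + (si - sj) * (1 - yi))) by ring.
  lra.
Qed.

Section Invariance.

Variables (D : nat) (m : nat -> R) (n : nat -> nat) (s : nat -> nat -> R)
  (lam gam : R) (x : nat -> nat -> R) (I : R -> nat -> nat -> R).

Hypothesis Hdbar : 0 < dbar D m.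
Hypothesis Hs01 : forall d i, (1 <= d <= D)%nat -> (1 <= i <= n d)%nat ->
  0 <= s d i <= 1.
Hypothesis Hlam : 0 < lam.
Hypothesis Hgam : 0 < gam.
Hypothesis Hx : social_state D n m x.
Hypothesis Hode : forall d i t, (1 <= d <= D)%nat -> (1 <= i <= n d)%nat ->
  0 < t -> is_derive (fun u => I u d i) t
    (- gam * I t d i + lam * (1 - s d i) * (1 - I t d i) * INR d * Theta D n m x I t).

(* If the profile stays in the box on (0,T), it is still in the box at T:
   I' >= -gam I and (1 - I)' >= -lam d (1 - I) there, since 0 < Theta <= 1. *)
Lemma box_closed_at T :
  0 < T -> (forall t, 0 < t < T -> in_open_unit D n (I t)) ->
  in_open_unit D n (I T).
Proof.
  intros HT Hbox d i Hd Hi.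
  destruct (Hs01 d i Hd Hi) as [Hs0 Hs1].
  assert (HdR : 0 <= INR d) by apply pos_INR.
  assert (Hmid : 0 < I (T/2) d i < 1) by (apply Hbox; auto; lra).
  assert (Hderiv : forall t, T/2 <= t <= T -> is_derive (fun u => I u d i) t
    (- gam * I t d i + lam * (1 - s d i) * (1 - I t d i) * INR d * Theta D n m x I t))
    by (intros; apply Hode; auto; lra).
  assert (Hbounds : forall t, T/2 < t < T ->
    0 < I t d i < 1 /\ 0 < Theta D n m x I t <= 1).
  { intros t Ht. split; [apply Hbox; auto; lra|].
    apply Theta_bounds; auto; apply Hbox; lra. }
  split.
  - apply (pos_of_derive_lower_bound (fun u => I u d i)
      (fun t => - gam * I t d i
                + lam * (1 - s d i) * (1 - I t d i) * INR d * Theta D n m x I t)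
      gam (T/2) T); [lra|exact Hderiv| |apply Hmid].
    intros t Ht; destruct (Hbounds t Ht) as [HI HTh].
    assert (0 <= lam * (1 - s d i) * (1 - I t d i) * INR d * Theta D n m x I t)
      by (apply Rmult_le_pos; [repeat apply Rmult_le_pos|]; lra).
    lra.
  - enough (0 < 1 - I T d i) by lra.
    apply (pos_of_derive_lower_bound (fun u => 1 - I u d i)
      (fun t => - (- gam * I t d i
                   + lam * (1 - s d i) * (1 - I t d i) * INR d * Theta D n m x I t))
      (lam * INR d) (T/2) T); [lra| | |lra].
    + intros t Ht.
      pose proof (is_derive_minus (fun _ => 1) (fun u => I u d i) t 0 _
        (is_derive_const 1 t) (Hderiv t Ht)) as Hdiff.
      unfold minus, plus, opp, zero in Hdiff; simpl in Hdiff.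
      rewrite <- (Rplus_0_l (- _)). exact Hdiff.
    + intros t Ht; destruct (Hbounds t Ht) as [HI HTh].
      assert (0 <= lam * INR d * (1 - I t d i)) by (repeat apply Rmult_le_pos; lra).
      assert (0 <= lam * INR d * (1 - I t d i) * (1 - (1 - s d i) * Theta D n m x I t))
        by (apply Rmult_le_pos; nra).
      assert (0 <= gam * I t d i) by (apply Rmult_le_pos; lra).
      replace (lam * INR d * (1 - I t d i)
               + - (- gam * I t d i
                    + lam * (1 - s d i) * (1 - I t d i) * INR d * Theta D n m x I t))
        with (lam * INR d * (1 - I t d i) * (1 - (1 - s d i) * Theta D n m x I t)
              + gam * I t d i) by ring.
      lra.
Qed.

Lemma box_open_at T :
  0 < T -> in_open_unit D n (I T) -> locally T (fun t => in_open_unit D n (I t)).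
Proof.
  intros HT Hbox. apply (filter_in_open_unit (locally T) D n I); intros d i Hd Hi.
  pose proof (proj1 (continuity_pt_filterlim (fun u => I u d i) T)
    (is_derive_continuity_pt _ _ _ (Hode d i T Hd Hi HT))) as Hcont.
  apply (Hcont (fun u => 0 < u < 1)).
  apply (open_and (fun u => 0 < u) (fun u => u < 1));
    [apply open_gt|apply open_lt|now apply Hbox].
Qed.

Lemma box_invariant (i0 : R) :
  0 < i0 < 1 ->
  (forall d i, (1 <= d <= D)%nat -> (1 <= i <= n d)%nat ->
     filterlim (fun t => I t d i) (at_right 0) (locally i0)) ->
  forall t, 0 < t -> in_open_unit D n (I t).
Proof.
  intros Hi0 Hcont0. apply continuous_induction.
  - apply (filter_in_open_unit (at_right 0) D n I); intros d i Hd Hi.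
    apply (Hcont0 d i Hd Hi (fun u => 0 < u < 1)).
    apply (open_and (fun u => 0 < u) (fun u => u < 1));
      [apply open_gt|apply open_lt|exact Hi0].
  - exact box_closed_at.
  - exact box_open_at.
Qed.

End Invariance.

Theorem mainTheorem6
  (D : nat) (m : nat -> R) (n : nat -> nat) (s : nat -> nat -> R)
  (lam gam i0 : R) (x : nat -> nat -> R) (I : R -> nat -> nat -> R)
  (HD : (1 <= D)%nat)
  (Hm : forall d, (1 <= d <= D)%nat -> 0 <= m d <= 1)
  (Hmsum : sumR D m = 1)
  (Hdbar : 0 < dbar D m)
  (Hn : forall d, (1 <= d <= D)%nat -> (1 <= n d)%nat)
  (Hs01 : forall d i, (1 <= d <= D)%nat -> (1 <= i <= n d)%nat ->
            0 <= s d i <= 1)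
  (Hsinc : forall d i j, (1 <= d <= D)%nat -> (1 <= j)%nat -> (j < i)%nat ->
            (i <= n d)%nat -> s d j < s d i)
  (Hlam : 0 < lam) (Hgam : 0 < gam)
  (Hx : social_state D n m x)
  (Hi0 : 0 < i0 < 1)
  (Hinit : forall d i, (1 <= d <= D)%nat -> (1 <= i <= n d)%nat -> I 0 d i = i0)
  (Hcont0 : forall d i, (1 <= d <= D)%nat -> (1 <= i <= n d)%nat ->
            filterlim (fun t => I t d i) (at_right 0) (locally i0))
  (Hode : forall d i t, (1 <= d <= D)%nat -> (1 <= i <= n d)%nat -> 0 < t ->
            is_derive (fun u => I u d i) t
              (- gam * I t d i
               + lam * (1 - s d i) * (1 - I t d i) * INR d * Theta D n m x I t)) :
  forall d i j t, (1 <= d <= D)%nat -> (1 <= j)%nat -> (j < i)%nat ->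
    (i <= n d)%nat -> 0 < t -> I t d i < I t d j.
Proof.
  intros d i j t Hd Hj Hji Hin Ht.
  assert (Hi : (1 <= i <= n d)%nat) by lia.
  assert (Hj' : (1 <= j <= n d)%nat) by lia.
  pose proof (box_invariant D m n s lam gam x I Hdbar Hs01 Hlam Hgam Hx Hode
    i0 Hi0 Hcont0) as Hbox.
  set (rate k u := - gam * I u d k
    + lam * (1 - s d k) * (1 - I u d k) * INR d * Theta D n m x I u).
  enough (0 < I t d j - I t d i) by lra.
  apply (positive_of_barrier (fun u => I u d j - I u d i)
    (fun u => rate j u - rate i u)); [| |clear t Ht|exact Ht].
  - intros u Hu. exact (is_derive_minus _ _ u _ _
      (Hode d j u Hd Hj' Hu) (Hode d i u Hd Hi Hu)).
  - intros u Hu Hgap. apply rate_gap_pos; try lra.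
    + apply (lt_INR 0); lia.
    + apply Theta_bounds; auto.
    + now apply Hsinc.
    + now apply Hs01.
    + now apply Hbox.
  - (* Both coordinates start at i0, so their gap tends to 0 at 0+. *)
    intros e He. apply filter_imp with
      (fun u => i0 - e/2 < I u d j /\ I u d i < i0 + e/2); [intros u; lra|].
    apply filter_and.
    + apply (Hcont0 d j Hd Hj' (fun y => i0 - e/2 < y)), open_gt; lra.
    + apply (Hcont0 d i Hd Hi (fun y => y < i0 + e/2)), open_lt; lra.
Qed.
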